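(* Let $A=(a(x),dF(x))$ and $B=(b(x),dF(x))$ be games. Then $f(p)=\exp\big(\int\log(pa(x)+(1-p)b(x))\,dF(x)\big)/e^r$ is continuous on $[0,1]$.
   Context: A game is a pair $(a(x),dF(x))$ with $dF$ a probability measure on $\mathbb{R}$ and $a\ge0$ measurable with finite positive integral. A real $r$ is fixed; convention $\exp(-\infty)=0$. *)

From HB Require Import structures.
From mathcomp Require Import all_boot all_order all_algebra.
From mathcomp Require Import all_classical all_reals all_analysis.
Set Implicit Arguments. Unset Strict Implicit. Unset Printing Implicit Defensive.
Import Order.TTheory GRing.Theory Num.Theory.
Import numFieldNormedType.Exports.
Local Open Scope ring_scope.
Local Open Scope ereal_scope.

Definition elog {R : realType} (y : R) : \bar R :=
  if (0 < y)%R then (ln y)%:E else -oo.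

Definition is_game {R : realType} (F : probability R R) (a : R -> R) : Prop :=
  [/\ (forall x, (0 <= a x)%R), measurable_fun setT a,
      0 < \int[F]_x (a x)%:E & \int[F]_x (a x)%:E < +oo].

Definition fgame {R : realType} (F : probability R R) (a b : R -> R) (r p : R) : R :=
  (fine (expeR (\int[F]_x elog (p * a x + (1 - p) * b x)%R)) / expR r)%R.

(* Write G(g) = exp (\int log g dF) for the geometric mean, so that f(p) is
   G(p a + (1 - p) b) / e^r.  G is monotone and positively homogeneous, and
   l (p a + (1 - p) b) <= q a + (1 - q) b as soon as l p <= q and
   l (1 - p) <= 1 - q.  Taking l close to 1 gives G(q) >= l G(p) for q near p,
   which is lower semicontinuity on [0, 1]; with p and q exchanged it gives
   upper semicontinuity on ]0, 1[.  At p = 0 the mixture is below b + p a, and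
   \int log (b + t a) dF tends to \int log b dF as t decreases to 0: the
   positive parts of the logarithms converge by dominated convergence and the
   negative parts by monotone convergence.  The endpoint p = 1 is symmetric. *)

From HB Require Import structures.
From mathcomp Require Import all_boot all_order all_algebra.
From mathcomp Require Import all_classical all_reals all_analysis.
From mathcomp Require Import measurable_realfun ring lra.
Set Implicit Arguments. Unset Strict Implicit. Unset Printing Implicit Defensive.
Import Order.TTheory GRing.Theory Num.Theory.
Import numFieldNormedType.Exports.
Local Open Scope classical_set_scope.
Local Open Scope ring_scope.

Section elog.
Context {R : realType}.
Implicit Types y z : R.

Lemma gt0_elog y : 0 < y -> elog y = (ln y)%:E.
Proof. by rewrite /elog => ->. Qed.

Lemma le0_elog y : y <= 0 -> elog y = -oo%E.
Proof. by rewrite /elog leNgt => /negbTE ->. Qed.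

Lemma le_elog : {homo @elog R : y z / y <= z >-> (y <= z)%E}.
Proof.
move=> y z yz; have [y0|y0] := ltrP 0 y; last by rewrite le0_elog // leNye.
by rewrite !gt0_elog ?(lt_le_trans y0) // lee_fin ler_ln // posrE (lt_le_trans y0).
Qed.

Lemma elog_le_id y : 0 <= y -> (elog y <= y%:E)%E.
Proof.
move=> y0; have [{}y0|y0'] := ltrP 0 y; last by rewrite le0_elog // leNye.
by rewrite gt0_elog // lee_fin ltW // ln_sublinear.
Qed.

Lemma elogM (l : R) y : 0 < l -> elog (l * y) = ((ln l)%:E + elog y)%E.
Proof.
move=> l0; have [y0|y0] := ltrP 0 y.
  by rewrite !gt0_elog ?mulr_gt0 // lnM.
by rewrite !le0_elog ?addeNy // pmulr_rle0.
Qed.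

Lemma measurable_elog : measurable_fun setT (@elog R).
Proof.
apply: measurable_fun_ifT.
- exact: measurable_fun_ltr.
- by apply/measurable_EFinP; exact: measurable_ln.
- exact: measurable_cst.
Qed.

Lemma continuous_elog : continuous (@elog R).
Proof.
move=> y; rewrite /continuous_at; have [y0|y0] := ltrP 0 y.
  rewrite gt0_elog //; apply: cvg_EFin.
    by near=> z; rewrite gt0_elog //; near: z; exact: lt_nbhsr.
  apply: (@cvg_trans _ (ln z @[z --> y])); last exact: continuous_ln.
  by apply: near_eq_cvg; near=> z; rewrite /= gt0_elog //; near: z; exact: lt_nbhsr.
rewrite le0_elog //; apply/cvgeNyPle => A; near=> z.
rewrite -(expRK A) -gt0_elog ?expR_gt0 //; apply: le_elog; apply: ltW.
by near: z; apply: lt_nbhsl; exact: le_lt_trans y0 (expR_gt0 A).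
Unshelve. all: by end_near. Qed.

End elog.

Section integral_measurable.
Context d (T : measurableType d) (R : realType) (mu : {measure set T -> \bar R}).
Variables (D : set T) (mD : measurable D).
Local Open Scope ereal_scope.

Lemma le_integral_measurable (f g : T -> \bar R) :
  measurable_fun D f -> measurable_fun D g -> (forall x, D x -> f x <= g x) ->
  \int[mu]_(x in D) f x <= \int[mu]_(x in D) g x.
Proof.
move=> mf mg fg; have fgD : {in D, forall x, f x <= g x} by move=> x /set_mem /fg.
rewrite [leLHS]integralE [leRHS]integralE; apply: leeB.
  apply: ge0_le_integral => //; do ?exact: measurable_funepos.
  by move=> x Dx; exact: funepos_le fgD _ (mem_set Dx).
apply: ge0_le_integral => //; do ?exact: measurable_funeneg.
by move=> x Dx; exact: funeneg_le fgD _ (mem_set Dx).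
Qed.

Lemma integrable_ub_gtNy (f g : T -> \bar R) :
  measurable_fun D f -> mu.-integrable D g -> (forall x, D x -> f x <= g x) ->
  -oo < \int[mu]_(x in D) f x -> mu.-integrable D f.
Proof.
move=> mf ig fg fNy; apply/integrableP; split => //.
have fgD : {in D, forall x, f x <= g x} by move=> x /set_mem /fg.
have posf : \int[mu]_(x in D) f^\+ x < +oo.
  have /fin_numPlt/andP[_] := integrable_pos_fin_num mD ig; apply: le_lt_trans.
  apply: ge0_le_integral => //; do ?exact: measurable_funepos (measurable_int _ ig).
  - exact: measurable_funepos.
  - by move=> x Dx; exact: funepos_le fgD _ (mem_set Dx).
have negf : \int[mu]_(x in D) f^\- x < +oo.
  rewrite ltey; apply: contraTneq fNy => negy.
  by rewrite integralE negy /= addeNy ltxx.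
rewrite (_ : (fun x => `|f x|) = f^\+ \+ f^\-); last exact: fune_abse.
rewrite ge0_integralD //; do ?by move=> x _; [exact: funepos_ge0|exact: funeneg_ge0].
- exact: lte_add_pinfty.
- exact: measurable_funepos.
- exact: measurable_funeneg.
Qed.

Lemma integrable_lincomb (k l : R) (f g : T -> R) :
  mu.-integrable D (EFin \o f) -> mu.-integrable D (EFin \o g) ->
  mu.-integrable D (EFin \o (fun x => k * f x + l * g x)%R).
Proof.
move=> intf intg.
rewrite (_ : _ \o _ = (fun x => k%:E * (f x)%:E) \+ (fun x => l%:E * (g x)%:E)).
  by apply: integrableD => //; exact: integrableZl.
by apply/funext => x; rewrite /= EFinD !EFinM.
Qed.

End integral_measurable.

Section integral_elog_shift.
Context d (T : measurableType d) (R : realType) (mu : {measure set T -> \bar R}).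
Variables (f g : T -> R) (t : R^nat).
Hypotheses (f0 : forall x, 0 <= f x) (g0 : forall x, 0 <= g x).
Hypotheses (intf : mu.-integrable setT (EFin \o f)).
Hypotheses (intg : mu.-integrable setT (EFin \o g)).
Hypotheses (t_nincr : nonincreasing_seq t) (t_cvg0 : t @ \oo --> 0).
Local Open Scope ereal_scope.

Let t_ge0 n : (0 <= t n)%R.
Proof.
by rewrite -(cvg_lim _ t_cvg0) //; apply: nonincreasing_cvgn_ge => //; exact: cvgP t_cvg0.
Qed.

Let h n x := elog (f x + t n * g x).

Let mh n : measurable_fun setT (h n).
Proof.
apply: measurableT_comp measurable_elog _; apply: measurable_funD.
  exact/measurable_EFinP/(measurable_int mu intf).
by apply: measurable_funM => //; exact/measurable_EFinP/(measurable_int mu intg).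
Qed.

Let mh_lim : measurable_fun setT (fun x => elog (f x)).
Proof.
apply: measurableT_comp measurable_elog _.
exact/measurable_EFinP/(measurable_int mu intf).
Qed.

Let h_cvg x : h ^~ x @ \oo --> elog (f x).
Proof.
apply: continuous_cvg; first exact: continuous_elog.
rewrite -[X in _ --> X]addr0; apply: cvgD; first exact: cvg_cst.
by rewrite -(mul0r (g x)); exact: cvgMl.
Qed.

Lemma cvg_integral_elog_shift :
  \int[mu]_x elog (f x + t n * g x) @[n --> \oo] --> \int[mu]_x elog (f x).
Proof.
(* The positive parts are dominated by [f + t 0 * g]; the negative parts
   increase with [n] since [t] decreases. *)
have h_le n x : h n x <= (f x + t 0%N * g x)%:E.
  apply: le_trans (elog_le_id _) _; first by rewrite addr_ge0 // mulr_ge0.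
  by rewrite lee_fin lerD2l ler_wpM2r // t_nincr.
have pos_cvg x : (h n)^\+ x @[n --> \oo] --> (fun x => elog (f x))^\+ x.
  rewrite funeposE; under eq_fun do rewrite funeposE.
  apply: continuous2_cvg (@h_cvg x) (cvg_cst 0).
  exact: (@max_continuous _ (\bar R) (elog (f x), 0)).
have neg_cvg x : (h n)^\- x @[n --> \oo] --> (fun x => elog (f x))^\- x.
  rewrite funenegE; under eq_fun do rewrite funenegE.
  apply: continuous2_cvg (cvgeN (@h_cvg x)) (cvg_cst 0).
  exact: (@max_continuous _ (\bar R) (- elog (f x), 0)).
have dom : mu.-integrable setT (EFin \o (fun x => f x + t 0%N * g x)%R).
  have := integrable_lincomb measurableT 1%R (t 0%N) intf intg.
  by apply: eq_integrable => // x _; rewrite /= mul1r.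
have pos_le n x : `|(h n)^\+ x| <= (f x + t 0%N * g x)%:E.
  by rewrite gee0_abs ?funepos_ge0 // funeposE ge_max h_le lee_fin addr_ge0 ?mulr_ge0.
have [pos_int _ pos_int_cvg] := dominated_convergence measurableT
  (fun n => measurable_funepos (mh n)) (measurable_funepos mh_lim)
  (aeW _ (fun x _ => pos_cvg x)) dom (aeW _ (fun x n _ => pos_le n x)).
have neg_nd x : {homo (fun n => (h n)^\- x) : n m / (n <= m)%N >-> n <= m}.
  move=> n m nm; apply: (@funeneg_le _ _ setT (h m) (h n)); last by rewrite in_setT.
  by move=> y _; apply: le_elog; rewrite lerD2l ler_wpM2r // t_nincr.
have neg_int_cvg : \int[mu]_x (h n)^\- x @[n --> \oo] -->
    \int[mu]_x (fun x => elog (f x))^\- x.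
  have -> : \int[mu]_x (fun x => elog (f x))^\- x =
      \int[mu]_x limn (fun n => (h n)^\- x).
    by apply: eq_integral => x _; rewrite (cvg_lim _ (neg_cvg x)).
  by apply: cvg_monotone_convergence => // n; exact: measurable_funeneg.
rewrite integralE; under eq_fun do rewrite integralE.
apply: cvgeB pos_int_cvg neg_int_cvg.
exact/fin_num_adde_defr/(integrable_fin_num measurableT pos_int).
Qed.

End integral_elog_shift.

Section geometric_mean.
Context d (T : measurableType d) (R : realType) (P : probability T R).
Local Open Scope ereal_scope.

(* [fine] only discards the value +oo, which [integral_elog_lty] rules out for
   nonnegative integrable [g]. *)
Definition geo_mean (g : T -> R) : R := fine (expeR (\int[P]_x elog (g x))).

Lemma geo_mean_ge0 g : (0 <= geo_mean g)%R.
Proof. exact/fine_ge0/expeR_ge0. Qed.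

Section nonneg_integrable.
Variable g : T -> R.
Hypotheses (g0 : forall x, (0 <= g x)%R) (ig : P.-integrable setT (EFin \o g)).

Let mg : measurable_fun setT g.
Proof. exact/measurable_EFinP/(measurable_int P ig). Qed.

Lemma measurable_elog_comp : measurable_fun setT (fun x => elog (g x)).
Proof. exact: measurableT_comp measurable_elog mg. Qed.

Lemma integral_elog_lty : \int[P]_x elog (g x) < +oo.
Proof.
apply: le_lt_trans (integrable_lty measurableT ig).
apply: le_integral_measurable => //; first exact: measurable_elog_comp.
  exact: measurable_int ig.
by move=> x _; exact: elog_le_id.
Qed.

Lemma geo_meanE : (geo_mean g)%:E = expeR (\int[P]_x elog (g x)).
Proof. by rewrite /geo_mean; move: integral_elog_lty; case: (\int[P]_x _). Qed.

End nonneg_integrable.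

Lemma le_geo_mean (g h : T -> R) : (forall x, 0 <= g x)%R ->
  P.-integrable setT (EFin \o g) -> P.-integrable setT (EFin \o h) ->
  (forall x, g x <= h x)%R -> (geo_mean g <= geo_mean h)%R.
Proof.
move=> g0 ig ih gh; have h0 x : (0 <= h x)%R := le_trans (g0 x) (gh x).
rewrite -lee_fin !geo_meanE // lee_expeR.
apply: le_integral_measurable => //; do ?exact: measurable_elog_comp.
by move=> x _; exact: le_elog.
Qed.

Lemma integral_elogZ (l : R) (g : T -> R) : (0 < l)%R -> (forall x, 0 <= g x)%R ->
  P.-integrable setT (EFin \o g) -> -oo < \int[P]_x elog (g x) ->
  \int[P]_x elog (l * g x)%R = (ln l)%:E + \int[P]_x elog (g x).
Proof.
move=> l0 g0 ig gNy; under eq_integral do rewrite elogM //.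
have ielog : P.-integrable setT (fun x => elog (g x)).
  exact: (integrable_ub_gtNy measurableT (measurable_elog_comp ig) ig
    (fun x _ => elog_le_id (g0 x)) gNy).
rewrite integralD //; last exact: finite_measure_integrable_cst.
rewrite integral_cst //; congr (_ + _).
by rewrite -[RHS]mule1; congr (_ * _); exact: probability_setT.
Qed.

Lemma geo_meanZ (l : R) (g : T -> R) : (0 < l)%R -> (forall x, 0 <= g x)%R ->
  P.-integrable setT (EFin \o g) ->
  geo_mean (fun x => l * g x)%R = (l * geo_mean g)%R.
Proof.
move=> l0 g0 ig; have lg0 x : (0 <= l * g x)%R by rewrite mulr_ge0 // ltW.
have ilg : P.-integrable setT (EFin \o (fun x => l * g x)%R).
  rewrite (_ : _ \o _ = fun x => l%:E * (g x)%:E); last by apply/funext => x; rewrite /= EFinM.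
  exact: integrableZl.
have [gNy|gNy] := eqVneq (\int[P]_x elog (g x)) -oo; last first.
  apply: EFin_inj; rewrite EFinM !geo_meanE // integral_elogZ ?ltNye //.
  by rewrite expeRD /= lnK.
have [lgNy|lgNy] := eqVneq (\int[P]_x elog (l * g x)%R) -oo.
  by rewrite /geo_mean gNy lgNy /= mulr0.
(* Scaling [l * g] back by [l^-1] would make the log-integral of [g] finite. *)
have linv0 : (0 < l^-1)%R by rewrite invr_gt0.
have := integral_elogZ linv0 lg0 ilg; rewrite ltNye => /(_ lgNy).
under eq_integral do rewrite mulrA mulVf ?gt_eqF // mul1r.
move=> /(congr1 (fun y => y \is a fin_num)); rewrite gNy fin_numD /=.
by rewrite [X in _ = X]fin_numElt ltNye lgNy (integral_elog_lty lg0 ilg).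
Qed.

Lemma geo_mean_below_shift_lt (f g : T -> R) (e : R) :
  (forall x, 0 <= f x)%R -> (forall x, 0 <= g x)%R ->
  P.-integrable setT (EFin \o f) -> P.-integrable setT (EFin \o g) -> (0 < e)%R ->
  exists2 s : R, (0 < s)%R & forall (u : R) (h : T -> R), (0 <= u <= s)%R ->
    (forall x, 0 <= h x)%R -> P.-integrable setT (EFin \o h) ->
    (forall x, h x <= f x + u * g x)%R -> (geo_mean h < geo_mean f + e)%R.
Proof.
move=> f0 g0 intf intg e0.
have fe_gt0 : (0 < geo_mean f + e)%R by rewrite ltr_wpDl ?geo_mean_ge0.
set y := ln (geo_mean f + e).
have y_gt : \int[P]_x elog (f x) < y%:E.
  by rewrite -lte_expeR -geo_meanE //= lnK ?posrE ?lte_fin ?ltrDl.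
have harmonic_nincr : nonincreasing_seq (@harmonic R).
  by move=> m n mn; rewrite lef_pV2 ?posrE // ler_nat.
have := cvg_integral_elog_shift f0 g0 intf intg harmonic_nincr cvg_harmonic.
move=> /(_ `]-oo, y%:E[%classic) /(_ _)/wrap[|[N _ hN]].
  by apply: open_nbhs_nbhs; split; [exact: lray_open | rewrite /= in_itv].
pose s : R := harmonic N; have s0 : (0 < s)%R := harmonic_gt0 N.
have ints : P.-integrable setT (EFin \o (fun x => f x + s * g x)%R).
  have := integrable_lincomb measurableT 1%R s intf intg.
  by apply: eq_integrable => // x _; rewrite /= mul1r.
exists s => // u h /andP[u0 us] h0 inth hle.
apply: le_lt_trans (le_geo_mean h0 inth ints _) _.
  by move=> x; apply: le_trans (hle x) _; rewrite lerD2l ler_wpM2r.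
rewrite -lte_fin geo_meanE //; last by move=> x; rewrite addr_ge0 ?mulr_ge0 ?(ltW s0).
have -> : (geo_mean f + e)%:E = expeR y%:E by rewrite /= lnK.
by rewrite lte_expeR; have := hN N (leqnn N); rewrite /= in_itv.
Qed.
End geometric_mean.

Section scaling_near.
Context {R : realType}.

Lemma scale_gap (x e : R) : 0 <= x -> 0 < e ->
  exists l : R, [/\ 0 < l, l < 1, x - e < l * x & x < l * (x + e)].
Proof.
move=> x0 e0; exists ((x + e / 2) / (x + e)).
have xe0 : 0 < x + e by rewrite ltr_wpDl.
rewrite divr_gt0 ?ltr_wpDl ?divr_gt0 // ltr_pdivrMr // mul1r ltrD2l ltr_pdivrMr //.
rewrite mulrAC ltr_pdivlMr // divfK ?gt_eqF // ; split => //; [lra|nra|lra].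
Qed.

Lemma near_mix_scale (l p0 : R) : l < 1 -> 0 <= p0 <= 1 ->
  \forall p \near p0, 0 <= p <= 1 -> l * p0 <= p /\ l * (1 - p0) <= 1 - p.
Proof.
move=> l1 /andP[p00 p01].
have lower : \forall p \near p0, 0 <= p -> l * p0 <= p.
  have [p0_gt0|p0_le0] := ltrP 0 p0.
    have lp0 : l * p0 < p0 by rewrite -[ltRHS]mul1r ltr_pM2r.
    by near=> p => _; apply: ltW; near: p; exact: lt_nbhsr.
  have -> : p0 = 0 by apply/le_anti/andP.
  by near=> p; rewrite mulr0.
have upper : \forall p \near p0, p <= 1 -> l * (1 - p0) <= 1 - p.
  have [p0_lt1|p0_ge1] := ltrP p0 1.
    have lq0 : p0 < 1 - l * (1 - p0) by rewrite ltrBrDl -ltrBrDr; nra.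
    near=> p => _; suff : p < 1 - l * (1 - p0) by lra.
    by near: p; exact: lt_nbhsl.
  have -> : p0 = 1 by apply/le_anti/andP.
  by near=> p; rewrite subrr mulr0 subr_ge0.
by apply: filterS2 lower upper => p lo up /andP[p0' p1']; split; [exact: lo|exact: up].
Unshelve. all: by end_near. Qed.

Lemma near_mix_scale_interior (l p0 : R) : l < 1 -> 0 < p0 < 1 ->
  \forall p \near p0, l * p <= p0 /\ l * (1 - p) <= 1 - p0.
Proof.
move=> l1 /andP[p0_gt0 p0_lt1].
have lp : l * p @[p --> p0] --> l * p0 by apply: cvgMr; exact: cvg_id.
have lq : l * (1 - p) @[p --> p0] --> l * (1 - p0).
  by apply: cvgMr; apply: cvgB; [exact: cvg_cst | exact: cvg_id].
have lp0 : l * p0 < p0 by rewrite -[ltRHS]mul1r ltr_pM2r.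
have lq0 : l * (1 - p0) < 1 - p0 by rewrite -[ltRHS]mul1r ltr_pM2r ?subr_gt0.
near=> p; split; apply: ltW; near: p; [exact: cvgr_lt lp _ lp0 | exact: cvgr_lt lq _ lq0].
Unshelve. all: by end_near. Qed.

End scaling_near.

Section mixture.
Context d (T : measurableType d) (R : realType) (P : probability T R).
Variables (a b : T -> R).
Hypotheses (a0 : forall x, 0 <= a x) (b0 : forall x, 0 <= b x).
Hypotheses (inta : P.-integrable setT (EFin \o a)).
Hypotheses (intb : P.-integrable setT (EFin \o b)).

Let mix p x := p * a x + (1 - p) * b x.

Let G p := geo_mean P (mix p).

Let mix_ge0 p : 0 <= p <= 1 -> forall x, 0 <= mix p x.
Proof. by case/andP => p0 p1 x; rewrite addr_ge0 ?mulr_ge0 ?subr_ge0. Qed.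

Let integrable_mix p : P.-integrable setT (EFin \o mix p).
Proof. exact: integrable_lincomb. Qed.

Lemma geo_mean_mix_scale (l p q : R) : 0 <= p <= 1 -> 0 < l ->
  l * p <= q -> l * (1 - p) <= 1 - q -> l * G p <= G q.
Proof.
move=> p01 l0 lp lq; rewrite -geo_meanZ //; last exact: mix_ge0.
apply: le_geo_mean => //.
- by move=> x; rewrite mulr_ge0 ?(ltW l0) ?(mix_ge0 p01).
- have := integrable_lincomb measurableT (l * p) (l * (1 - p)) inta intb.
  by apply: eq_integrable => // x _; congr EFin; rewrite /mix; ring.
- by move=> x; rewrite /mix mulrDr !mulrA lerD ?ler_wpM2r.
Qed.

Lemma geo_mean_mix_lsc (p0 e : R) : 0 <= p0 <= 1 -> 0 < e ->
  \forall p \near p0, 0 <= p <= 1 -> G p0 - e < G p.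
Proof.
move=> p01 e0; have [l [l0 l1 lG _]] := scale_gap (geo_mean_ge0 P (mix p0)) e0.
apply: filterS (near_mix_scale l1 p01) => p lpq /lpq[lp lq].
by apply: lt_le_trans lG _; exact: geo_mean_mix_scale.
Qed.

Lemma geo_mean_mix_usc (p0 e : R) : 0 <= p0 <= 1 -> 0 < e ->
  \forall p \near p0, 0 <= p <= 1 -> G p < G p0 + e.
Proof.
move=> /andP[p00 p01] e0.
have [p0_gt0|p0_le0] := ltrP 0 p0; last first.
  have -> : p0 = 0 by apply/le_anti/andP.
  have -> : G 0 = geo_mean P b.
    by congr geo_mean; apply/funext => x; rewrite /mix mul0r add0r subr0 mul1r.
  have [s s0 hs] := geo_mean_below_shift_lt b0 a0 intb inta e0.
  near=> p => p01'; apply: (hs p _ _ (mix_ge0 p01') (integrable_mix p)).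
    case/andP: p01' => -> _; apply: ltW; near: p; exact: lt_nbhsl.
  by move=> x; have := b0 x; case/andP: p01' => ? _; rewrite /mix; nra.
have [p0_lt1|p0_ge1] := ltrP p0 1; last first.
  have -> : p0 = 1 by apply/le_anti/andP.
  have -> : G 1 = geo_mean P a.
    by congr geo_mean; apply/funext => x; rewrite /mix subrr mul0r addr0 mul1r.
  have [s s0 hs] := geo_mean_below_shift_lt a0 b0 inta intb e0.
  near=> p => p01'; apply: (hs (1 - p) _ _ (mix_ge0 p01') (integrable_mix p)).
    case/andP: p01' => _ p_le1; rewrite subr_ge0 p_le1 lerBlDr -lerBlDl.
    by apply: ltW; near: p; apply: lt_nbhsr; rewrite ltrBlDr ltrDl.
  by move=> x; have := a0 x; case/andP: p01' => _ ?; rewrite /mix; nra.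
have [l [l0 l1 _ lG]] := scale_gap (geo_mean_ge0 P (mix p0)) e0.
have p0_01 : 0 < p0 < 1 by rewrite p0_gt0.
apply: filterS (near_mix_scale_interior l1 p0_01) => p [lp lq] p01'.
rewrite -(ltr_pM2l l0); apply: le_lt_trans lG.
by apply: geo_mean_mix_scale.
Unshelve. all: by end_near. Qed.

Lemma continuous_geo_mean_mix : {within `[0, 1], continuous G}.
Proof.
apply/subspace_continuousP => p0; rewrite /= in_itv /= => p01.
apply/cvgrPdist_lt => e e0; rewrite near_withinE.
near=> p; rewrite /= in_itv /= => p01'; rewrite ltr_distlC.
apply/andP; split; move: p01'; near: p.
  exact: geo_mean_mix_lsc.
exact: geo_mean_mix_usc.
Unshelve. all: by end_near. Qed.

End mixture.

Lemma integrable_game {R : realType} (F : probability R R) (a : R -> R) :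
  is_game F a -> F.-integrable setT (EFin \o a).
Proof.
case=> a0 ma _ afin; apply/integrableP; split; first exact/measurable_EFinP.
rewrite (_ : (fun x => _) = EFin \o a) //.
by apply/funext => x; rewrite gee0_abs // lee_fin.
Qed.

Theorem lemmaD11 (R : realType) (r : R) (F : probability R R) (a b : R -> R) :
  is_game F a -> is_game F b ->
  {within `[0, 1], continuous (fgame F a b r)}.
Proof.
move=> ga gb; have [a0 _ _ _] := ga; have [b0 _ _ _] := gb.
have Gcont := continuous_geo_mean_mix a0 b0 (integrable_game ga) (integrable_game gb).
rewrite (_ : fgame F a b r = (fun y => y / expR r) \o
  (fun p => geo_mean F (fun x => p * a x + (1 - p) * b x))) //.
move=> p; apply: (continuous_comp (Gcont p)).
exact: cvgMl cvg_id.
Qed.
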